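(* Let $H=(V,E)$ be a finite simple graph, and let $M$ be a maximum $2$-matching of $H$ such that no singleton of $M$ has an A-alternating path saving it. Then the number of singletons of $M$ equals the minimum, over all path covers of $H$, of the number of $0$-paths in the path cover. In particular, deleting one edge from each cycle component of $(V,M)$ yields a path cover of $H$ with the minimum possible number of $0$-paths.
   Context: A path cover of $H$ is a collection of vertex-disjoint paths in $H$ that together cover all vertices. A single vertex counts as a $0$-path, and a $k$-path has $k$ edges. A $2$-matching of $H$ is a set $M\subseteq E$ in which every vertex is incident to at most two edges of $M$. It is maximum if $|M|$ is as large as possible. The components of $(V,M)$ are paths and cycles. A singleton of $M$ is a vertex of degree $0$ in $M$. Given a maximum $2$-matching $M$ and a singleton $v_0$ of $M$, an A-alternating path saving $v_0$ is a sequence of pairwise distinct vertices $v_0,v_1,\dots,v_{2i+2}$, with $i\ge 0$, satisfying: (1) $v_{2j}v_{2j+1}\in E\setminus M$ for every $j=0,\dots,i$; (2) for every $j=1,\dots,i$ there is a component $P_j$ of $(V,M)$ that is a $2$-path, with $v_{2j-1}$ its middle vertex and $v_{2j}$ one of its two endpoints, and $P_1,\dots,P_i$ are pairwise distinct; (3) $v_{2i+1}$ lies on a component $Q$ of $(V,M)$ that is either a cycle or a path with at least $3$ edges, $v_{2i+1}v_{2i+2}\in M$, and if $Q$ is a path then $v_{2i+2}$ is not an endpoint of $Q$. *)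

From HB Require Import structures.
From mathcomp Require Import all_boot.
Set Implicit Arguments. Unset Strict Implicit. Unset Printing Implicit Defensive.

(* A finite simple graph H = (V,E) is given by a vertex type T : finType and a
   symmetric irreflexive adjacency relation adj.  Edges are 2-element sets. *)
Definition edges (T : finType) (adj : rel T) : {set {set T}} :=
  [set e | [exists x, exists y, adj x y && (e == [set x; y])]].

Definition mdeg (T : finType) (M : {set {set T}}) (x : T) : nat :=
  #|[set e in M | x \in e]|.

Definition two_matching (T : finType) (adj : rel T) (M : {set {set T}}) : bool :=
  (M \subset edges adj) && [forall x, mdeg M x <= 2].

Definition max_two_matching (T : finType) (adj : rel T) (M : {set {set T}}) : Prop :=
  two_matching adj M /\
  forall M' : {set {set T}}, two_matching adj M' -> #|M'| <= #|M|.

Definition singleton (T : finType) (M : {set {set T}}) (x : T) : bool :=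
  mdeg M x == 0.

Definition Mrel (T : finType) (M : {set {set T}}) : rel T :=
  fun x y => [set x; y] \in M.

Definition mcomp (T : finType) (M : {set {set T}}) (x : T) : {set T} :=
  [set y | connect (Mrel M) x y].

Definition comp_nedges (T : finType) (M : {set {set T}}) (C : {set T}) : nat :=
  #|[set e in M | e \subset C]|.

(* a component of (V,M) (M a 2-matching) is a cycle iff all its vertices have
   M-degree 2; otherwise it is a path *)
Definition is_cycle_comp (T : finType) (M : {set {set T}}) (C : {set T}) : bool :=
  [forall y in C, mdeg M y == 2].

Definition is_path_comp (T : finType) (M : {set {set T}}) (C : {set T}) : bool :=
  ~~ is_cycle_comp M C.

Definition is_endpoint (T : finType) (M : {set {set T}}) (x : T) : bool :=
  mdeg M x <= 1.

Definition A_alt_path_saving (T : finType) (adj : rel T) (M : {set {set T}}) (v0 : T)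
  : Prop :=
  exists (i : nat) (v : nat -> T),
    v 0 = v0 /\
    (forall a b, a <= 2 * i + 2 -> b <= 2 * i + 2 -> v a = v b -> a = b) /\
    [/\
         (forall j, j <= i -> [set v (2 * j); v (2 * j + 1)] \in edges adj :\: M),
        (forall j, 1 <= j <= i ->
           let P := mcomp M (v (2 * j - 1)) in
           [&& is_path_comp M P, comp_nedges M P == 2,
               mdeg M (v (2 * j - 1)) == 2, v (2 * j) \in P
             & is_endpoint M (v (2 * j))]),
        (forall j k, 1 <= j <= i -> 1 <= k <= i ->
           mcomp M (v (2 * j - 1)) = mcomp M (v (2 * k - 1)) -> j = k)
      &
        let Q := mcomp M (v (2 * i + 1)) in
        [/\ is_cycle_comp M Q || (3 <= comp_nedges M Q),
            [set v (2 * i + 1); v (2 * i + 2)] \in M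
          & is_path_comp M Q -> ~~ is_endpoint M (v (2 * i + 2))]].

Definition gpath (T : finType) (adj : rel T) (p : seq T) : bool :=
  if p is x :: q then path adj x q && uniq p else false.

Definition path_cover (T : finType) (adj : rel T) (ps : seq (seq T)) : bool :=
  [&& all (gpath adj) ps, uniq (flatten ps) & [forall x, x \in flatten ps]].

Definition n_zero_paths (T : finType) (ps : seq (seq T)) : nat :=
  count (fun p => size p == 1) ps.

Definition pc_edges (T : finType) (ps : seq (seq T)) : {set {set T}} :=
  [set e | e \in flatten [seq [seq [set ab.1; ab.2] | ab <- zip p (behead p)] | p <- ps]].

From HB Require Import structures.
From mathcomp Require Import all_boot zify.
Set Implicit Arguments. Unset Strict Implicit. Unset Printing Implicit Defensive.

(* Write s(N) for the number of singletons of a 2-matching N. The edges of a path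
   cover form a 2-matching whose singletons are exactly its 0-paths, and deleting
   one edge from each cycle of M leaves a union of paths with the same singletons
   as M; so it suffices to show s(M) <= s(F) for every 2-matching F.  If a
   singleton v0 of M is covered by an F-edge v0 v1, maximality of M forces v1 to
   have M-degree 2, and the absence of saving paths forces v1 to be the middle of
   a 2-path of M; one of its two M-edges is not in F and can be exchanged for
   v0 v1.  This gives a maximum 2-matching with as many singletons and closer to
   F, still without saving paths: an alternating walk for it yields one for M,
   and a shortest alternating walk is a path.  Induction on |F \ M| concludes. *)

Lemma cards3 (T : finType) (x y z : T) : x != y -> x != z -> y != z -> #|[set x; y; z]| = 3.
Proof.
by move=> nxy nxz nyz; rewrite -setUA cardsU1 cards2 nyz !inE (negbTE nxy) (negbTE nxz).
Qed.

Section Flatten.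
Variable T : eqType.
Implicit Types (p q : seq T) (ps : seq (seq T)) (x : T).

Lemma uniq_flatten_mem ps p : uniq (flatten ps) -> p \in ps -> uniq p.
Proof.
elim: ps => [|h t IH] //=; rewrite cat_uniq inE => /and3P [uh _ ut] /orP [/eqP ->|pt] //.
exact: IH.
Qed.

Lemma uniq_flatten_eq ps p q x :
  uniq (flatten ps) -> p \in ps -> q \in ps -> x \in p -> x \in q -> p = q.
Proof.
elim: ps => [|h t IH] //=; rewrite cat_uniq !inE => /and3P [uh nh ut].
have disj y s : s \in t -> y \in s -> y \in h -> False.
  by move=> st ys yh; move/hasP: nh; apply; exists y => //; apply/flattenP; exists s.
move=> /orP [/eqP ->|pt] /orP [/eqP ->|qt] xp xq //.
- by case: (disj x q qt xq xp).
- by case: (disj x p pt xp xq).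
- exact: IH.
Qed.

Lemma uniq_flatten_uniq ps : (forall p, p \in ps -> p != [::]) -> uniq (flatten ps) -> uniq ps.
Proof.
elim: ps => [|h t IH] //= ne; rewrite cat_uniq => /and3P [_ nh ut].
have -> : uniq t by apply: IH => // p pt; apply: ne; rewrite inE pt orbT.
rewrite andbT; apply: contra nh => ht.
case: h ne ht => [|y h] ne ht; first by move: (ne [::]); rewrite inE eqxx => /(_ isT).
apply/hasP; exists y; last by rewrite inE eqxx.
by apply/flattenP; exists (y :: h) => //; rewrite inE eqxx.
Qed.

End Flatten.

Lemma last_rev (T : Type) (x : T) s : last x (rev s) = head x s.
Proof. by case: s => [|z s] //; rewrite rev_cons last_rcons. Qed.

Section Degrees.
Variable T : finType.
Implicit Types (M F : {set {set T}}) (x y z : T).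

Lemma set2_injr x y z : x != y -> [set x; y] = [set x; z] -> y = z.
Proof.
move=> nxy exy; have : y \in [set x; z] by rewrite -exy set22.
by rewrite !inE => /orP [/eqP yx|/eqP //]; rewrite yx eqxx in nxy.
Qed.

Lemma mdegS M F x : M \subset F -> mdeg M x <= mdeg F x.
Proof.
move=> sMF; apply: subset_leq_card; apply/subsetP => e; rewrite !inE => /andP [eM ->].
by rewrite (subsetP sMF).
Qed.

Lemma mdeg_gt0P M x : reflect (exists2 e, e \in M & x \in e) (0 < mdeg M x).
Proof.
rewrite /mdeg card_gt0; apply: (iffP (set0Pn _)).
  by case=> e; rewrite inE => /andP [] ?; exists e.
by case=> e ? ?; exists e; rewrite inE; apply/andP.
Qed.

Lemma singleton_notin M x e : singleton M x -> e \in M -> x \notin e.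
Proof.
move=> /eqP sx eM; apply/negP => xe.
have : 0 < mdeg M x by apply/mdeg_gt0P; exists e.
by rewrite sx.
Qed.

Lemma mdegU1 M e x : mdeg (e |: M) x = mdeg M x + ((x \in e) && (e \notin M)).
Proof.
rewrite /mdeg; case xe: (x \in e) => /=.
  have -> : [set f in e |: M | x \in f] = e |: [set f in M | x \in f].
    by apply/setP=> f; rewrite !inE; case: (f =P e) => [->|]; rewrite ?xe ?andbT.
  by rewrite cardsU1 inE xe andbT addnC.
rewrite addn0; apply: eq_card => f; rewrite !inE.
by case: (f =P e) => [->|] //=; rewrite xe !andbF.
Qed.

Lemma mdegD1 M e x : mdeg (M :\ e) x = mdeg M x - ((x \in e) && (e \in M)).
Proof.
rewrite /mdeg; case xe: (x \in e) => /=; last first.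
  rewrite subn0; apply: eq_card => f; rewrite !inE.
  by case: (f =P e) => [->|] //=; rewrite xe !andbF.
have -> : [set f in M :\ e | x \in f] = [set f in M | x \in f] :\ e.
  by apply/setP=> f; rewrite !inE andbA.
rewrite (cardsD1 e [set f in M | x \in f]) inE xe andbT.
by case: (e \in M); rewrite ?subn0 // addKn.
Qed.

Lemma mdegD M D x : mdeg M x <= mdeg (M :\: D) x + #|[set e in D | x \in e]|.
Proof.
apply: leq_trans (leq_card_setU _ _).1; apply: subset_leq_card; apply/subsetP => e.
by rewrite !inE => /andP [-> ->]; rewrite !andbT; case: (e \in D).
Qed.

Lemma mdeg1_uniq M x e1 e2 :
  mdeg M x = 1 -> e1 \in M -> x \in e1 -> e2 \in M -> x \in e2 -> e1 = e2.
Proof.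
move=> /eqP/cards1P [e Ex] e1M xe1 e2M xe2.
have : e1 \in [set e] by rewrite -Ex inE e1M xe1.
have : e2 \in [set e] by rewrite -Ex inE e2M xe2.
by rewrite !inE => /eqP -> /eqP ->.
Qed.

Lemma mdeg2P M x : mdeg M x = 2 ->
  exists e1 e2, [/\ e1 != e2, e1 \in M, x \in e1, e2 \in M & x \in e2].
Proof.
move=> /eqP/cards2P [e1 [e2 [ne12 Ex]]].
have : e1 \in [set e in M | x \in e] by rewrite Ex set21.
have : e2 \in [set e in M | x \in e] by rewrite Ex set22.
by rewrite !inE => /andP [e2M xe2] /andP [e1M xe1]; exists e1, e2.
Qed.

Lemma mdeg2_exchangeable M F x e : mdeg M x = 2 -> mdeg F x <= 2 ->
  e \in F -> e \notin M -> x \in e -> exists2 f, f \in M :\: F & x \in f.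
Proof.
move=> /mdeg2P [e1 [e2 [ne12 e1M xe1 e2M xe2]]] dF eF eM xe.
case e1F: (e1 \in F); last by exists e1; rewrite // inE e1F.
case e2F: (e2 \in F); last by exists e2; rewrite // inE e2F.
have ne1 : e != e1 by apply: contraNneq eM => ->.
have ne2 : e != e2 by apply: contraNneq eM => ->.
suff : 3 <= mdeg F x by move/leq_trans/(_ dF).
rewrite -(cards3 ne1 ne2 ne12); apply: subset_leq_card; apply/subsetP => f.
by rewrite !inE -orbA => /or3P [] /eqP ->; apply/andP.
Qed.

End Degrees.

Section Components.
Variable T : finType.
Implicit Types (M : {set {set T}}) (x y z : T).

Lemma connect_stable (r : rel T) (A : {set T}) x y :
  (forall u v, u \in A -> r u v -> v \in A) -> x \in A -> connect r x y -> y \in A.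
Proof.
move=> rA xA /connectP [p pp ->]; elim: p x xA pp => [|z p IHp] x xA //= /andP [rxz pp].
exact: IHp (rA _ _ xA rxz) pp.
Qed.

Lemma mem_mcomp M x : x \in mcomp M x.
Proof. by rewrite inE connect0. Qed.

Lemma mcomp_edge M x y : [set x; y] \in M -> y \in mcomp M x.
Proof. by move=> xyM; rewrite inE; apply: connect1. Qed.

Lemma mcomp_eq M x y : y \in mcomp M x -> mcomp M y = mcomp M x.
Proof.
have Msym : connect_sym (Mrel M) by apply: sym_connect_sym => u v; rewrite /Mrel setUC.
rewrite inE => cxy; apply/setP => z; rewrite !inE.
apply/idP/idP => h; first exact: connect_trans cxy h.
by rewrite Msym in cxy; apply: connect_trans cxy h.
Qed.

Lemma edge_sub_mcomp M x y : [set x; y] \in M -> [set x; y] \subset mcomp M x.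
Proof.
by move=> xyM; apply/subsetP => u; rewrite !inE => /orP [] /eqP ->; rewrite ?connect0 ?connect1.
Qed.

End Components.

Section Graph.
Variables (T : finType) (adj : rel T).
Hypotheses (adj_sym : symmetric adj) (adj_irr : irreflexive adj).
Implicit Types (x y : T).

Lemma mem_edgesP e : reflect (exists x y, adj x y /\ e = [set x; y]) (e \in edges adj).
Proof.
rewrite inE; apply: (iffP existsP).
  by case=> x /existsP [y /andP [axy /eqP ->]]; exists x, y.
by case=> x [y [axy ->]]; exists x; apply/existsP; exists y; rewrite axy eqxx.
Qed.

Lemma edges_at e x : e \in edges adj -> x \in e -> exists y, adj x y /\ e = [set x; y].
Proof.
case/mem_edgesP=> u [v [auv ->]]; rewrite !inE => /orP [] /eqP ->; first by exists v.
by exists u; rewrite adj_sym setUC.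
Qed.

Lemma adj_neq x y : adj x y -> x != y.
Proof. by apply: contraTneq => ->; rewrite adj_irr. Qed.

Lemma loop_notin_edges x : [set x; x] \notin edges adj.
Proof.
apply/negP => /mem_edgesP [y [z [ayz exx]]].
have : y \in [set x; x] by rewrite exx set21.
have : z \in [set x; x] by rewrite exx set22.
by rewrite !inE !orbb => /eqP ez /eqP ey; rewrite ez ey adj_irr in ayz.
Qed.

End Graph.

(* [m] is the middle vertex of a component of (V, M) that is a 2-path. *)
Definition middle (T : finType) (M : {set {set T}}) (m : T) : bool :=
  (mdeg M m == 2) && [forall y, ([set m; y] \in M) ==> (mdeg M y == 1)].

(* [alt_reach adj M x]: x ends an even-length prefix of an A-alternating walk
   (vertices may repeat) starting at a singleton; [alt_saveable adj M]: such a
   walk can be completed by a non-M edge and an M-edge between two vertices of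
   M-degree 2. *)
Inductive alt_reach (T : finType) (adj : rel T) (M : {set {set T}}) : T -> Prop :=
| alt_reach0 x : singleton M x -> alt_reach adj M x
| alt_reachS x m z : alt_reach adj M x -> adj x m -> [set x; m] \notin M ->
    middle M m -> [set m; z] \in M -> alt_reach adj M z.

Definition alt_saveable (T : finType) (adj : rel T) (M : {set {set T}}) : Prop :=
  exists x y z, alt_reach adj M x /\
    [/\ adj x y, [set x; y] \notin M, mdeg M y = 2, [set y; z] \in M & mdeg M z = 2].

(* The path v 0, ..., v (2i+2) of [A_alt_path_saving], except that vertices may
   repeat and the last M-edge joins two vertices of M-degree 2. *)
Definition alt_walk (T : finType) (adj : rel T) (M : {set {set T}}) (i : nat) (v : nat -> T) :=
  [/\ singleton M (v 0),
      forall j, j <= i -> adj (v (2*j)) (v (2*j+1)) /\ [set v (2*j); v (2*j+1)] \notin M,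
      forall j, j < i -> middle M (v (2*j+1)) /\ [set v (2*j+1); v (2*j+2)] \in M,
      mdeg M (v (2*i+1)) = 2 /\ [set v (2*i+1); v (2*i+2)] \in M
    & mdeg M (v (2*i+2)) = 2].

Section Middle.
Variables (T : finType) (adj : rel T).
Hypotheses (adj_sym : symmetric adj) (adj_irr : irreflexive adj).
Variables (M : {set {set T}}).
Hypothesis HM : two_matching adj M.

Lemma edge_notin_loop x : [set x; x] \notin M.
Proof.
by case/andP: HM => ME _; apply: contraNN (loop_notin_edges adj_irr x); apply: (subsetP ME).
Qed.

Lemma middle_mcomp m :
  middle M m -> mcomp M m \subset [set w | (w == m) || ([set m; w] \in M)].
Proof.
case/andP => _ /forallP dm; apply/subsetP => w cw; rewrite inE in cw.
apply: (connect_stable _ _ cw); last by rewrite !inE eqxx.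
move=> u v; rewrite !inE /Mrel => /orP [/eqP ->|mu] uv; first by rewrite uv orbT.
have du : mdeg M u = 1 by apply/eqP; move: (dm u); rewrite mu.
have : v \in [set m; u] by rewrite (mdeg1_uniq du mu (set22 m u) uv (set21 u v)) set22.
rewrite !inE => /orP [/eqP ->|/eqP evu]; first by rewrite eqxx.
by move: uv; rewrite evu (negbTE (edge_notin_loop u)).
Qed.

Lemma middle_comp_nedges m : middle M m -> comp_nedges M (mcomp M m) = 2.
Proof.
move=> mm; have sub := middle_mcomp mm; case/andP: HM => ME _.
case/andP: (mm) => /eqP dm /forallP hm.
rewrite /comp_nedges -dm /mdeg; apply: eq_card => e; rewrite !inE.
case eM: (e \in M) => //=; apply/idP/idP => [se|me].
  have [x [y [axy ee]]] := mem_edgesP _ _ (subsetP ME _ eM).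
  have /subsetP/(_ x) := sub; rewrite (subsetP se x) ?ee ?set21 // => /(_ isT).
  have /subsetP/(_ y) := sub; rewrite (subsetP se y) ?ee ?set22 // => /(_ isT).
  rewrite !inE => /orP [/eqP ->|my]; first by rewrite eqxx orbT.
  move=> /orP [/eqP ->|mx]; first by rewrite eqxx.
  have dx : mdeg M x = 1 by apply/eqP; move: (hm x); rewrite mx.
  have xyM : [set x; y] \in M by rewrite -ee.
  have : y \in [set m; x] by rewrite (mdeg1_uniq dx mx (set22 m x) xyM (set21 x y)) set22.
  rewrite !inE => /orP [/eqP ->|/eqP yx]; first by rewrite eqxx orbT.
  by rewrite yx adj_irr in axy.
have [w [_ ee]] := edges_at adj_sym (subsetP ME _ eM) me.
by rewrite ee edge_sub_mcomp // -ee.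
Qed.

Lemma mdeg2_other_edge y z : mdeg M y = 2 -> [set y; z] \in M ->
  exists w, [/\ adj y w, w != z & [set y; w] \in M].
Proof.
move=> dy yzM; case/andP: HM => ME _.
have [e1 [e2 [ne12 e1M ye1 e2M ye2]]] := mdeg2P dy.
have [e [eM ye nez]] : exists e, [/\ e \in M, y \in e & e != [set y; z]].
  by case: (e1 =P [set y; z]) => [h|/eqP h]; [exists e2; rewrite -h eq_sym | exists e1].
have [w [ayw ee]] := edges_at adj_sym (subsetP ME _ eM) ye.
exists w; split => //; last by rewrite -ee.
by apply: contraNneq nez => wz; rewrite ee wz.
Qed.

Lemma comp_nedges_ge3 y z :
  mdeg M y = 2 -> [set y; z] \in M -> mdeg M z = 2 -> 3 <= comp_nedges M (mcomp M y).
Proof.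
move=> dy yzM dz.
have [w [ayw nwz ywM]] := mdeg2_other_edge dy yzM.
have zyM : [set z; y] \in M by rewrite setUC.
have [c [azc ncy zcM]] := mdeg2_other_edge dz zyM.
have nyz : y != z by apply: contraTneq yzM => ->; rewrite (negbTE (edge_notin_loop z)).
have nyc : y != c by rewrite eq_sym.
have n1 : [set y; z] != [set y; w] by apply: contraNneq nwz => /(set2_injr nyz) ->.
have n2 : [set y; z] != [set z; c].
  by apply: contraNneq ncy => h; move: (set21 y z); rewrite h !inE (negbTE nyz) eq_sym.
have n3 : [set y; w] != [set z; c].
  by apply/eqP => h; move: (set21 y w); rewrite h !inE (negbTE nyz) (negbTE nyc).
have zC : z \in mcomp M y by exact: mcomp_edge.
have sC : [set z; c] \subset mcomp M y by rewrite -(mcomp_eq zC) edge_sub_mcomp.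
rewrite -(cards3 n1 n2 n3) /comp_nedges; apply: subset_leq_card; apply/subsetP => e.
rewrite !inE => /orP [/orP [] | ] /eqP ->; rewrite ?yzM ?ywM ?zcM ?edge_sub_mcomp //.
Qed.

Lemma middle_two_path m z : middle M m -> [set m; z] \in M ->
  [&& is_path_comp M (mcomp M m), comp_nedges M (mcomp M m) == 2, mdeg M m == 2,
      z \in mcomp M m & is_endpoint M z].
Proof.
move=> mm mzM; case/andP: (mm) => dm /forallP /(_ z); rewrite mzM /= => /eqP dz.
rewrite middle_comp_nedges // dm mcomp_edge // /is_endpoint dz /= andbT.
by apply/forallP => /(_ z); rewrite mcomp_edge // dz.
Qed.

End Middle.

Definition extend_seq (T : Type) (v : nat -> T) (n : nat) (m z : T) : nat -> T :=
  fun k => if k <= n then v k else if k == n.+1 then m else z.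

Lemma extend_seq_le T (v : nat -> T) n m z k : k <= n -> extend_seq v n m z k = v k.
Proof. by rewrite /extend_seq => ->. Qed.

Lemma extend_seq1 T (v : nat -> T) n m z : extend_seq v n m z n.+1 = m.
Proof. by rewrite /extend_seq ltnn eqxx. Qed.

Lemma extend_seq2 T (v : nat -> T) n m z : extend_seq v n m z n.+2 = z.
Proof. by rewrite /extend_seq ifF ?ifF //; lia. Qed.

Lemma nat_even_odd a : exists p, a = 2*p \/ a = 2*p+1.
Proof.
elim: a => [|a [p [->|->]]]; first by exists 0; left.
  by exists p; right; lia.
by exists p.+1; left; lia.
Qed.

Lemma injective_upto_or_dup (T : eqType) (v : nat -> T) N :
  (forall a b, a <= N -> b <= N -> v a = v b -> a = b) \/
  exists a b, [/\ a < b, b <= N & v a = v b].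
Proof.
case: (boolP (uniq (mkseq v N.+1))) => [/(uniqP (v 0)) vinj|/(uniqPn (v 0)) [a [b [ab bN]]]].
  left => a b aN bN vab; apply: vinj; rewrite ?inE ?size_mkseq ?ltnS //.
  by rewrite !nth_mkseq ?ltnS.
rewrite size_mkseq ltnS in bN.
by rewrite !nth_mkseq ?ltnS //; [right; exists a, b | lia].
Qed.

Section Walks.
Variables (T : finType) (adj : rel T) (M : {set {set T}}).

Lemma alt_reach_walk x : alt_reach adj M x -> exists i v, [/\ singleton M (v 0),
    forall j, j < i -> adj (v (2*j)) (v (2*j+1)) /\ [set v (2*j); v (2*j+1)] \notin M,
    forall j, j < i -> middle M (v (2*j+1)) /\ [set v (2*j+1); v (2*j+2)] \in M
  & v (2*i) = x].
Proof.
elim=> {x} [x sx|x m z _ [i [v [s0 h1 h2 vx]]] axm xm mm mz].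
  by exists 0, (fun _ => x); split.
have E1 : (2*i).+1 = 2*i+1 by lia.
have E2 : (2*i).+2 = 2*i+2 by lia.
exists i.+1, (extend_seq v (2*i) m z); split.
- by rewrite extend_seq_le.
- move=> j ji; case: (ltnP j i) => [lji|lij]; first by rewrite !extend_seq_le; [exact: h1|lia|lia].
  have -> : j = i by lia.
  by rewrite -E1 extend_seq1 extend_seq_le // vx.
- move=> j ji; case: (ltnP j i) => [lji|lij]; first by rewrite !extend_seq_le; [exact: h2|lia|lia].
  have -> : j = i by lia.
  by rewrite -E1 -E2 extend_seq1 extend_seq2.
- by rewrite (_ : 2 * i.+1 = (2*i).+2) ?extend_seq2 //; lia.
Qed.

Lemma alt_saveable_walk : alt_saveable adj M -> exists i v, alt_walk adj M i v.
Proof.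
case=> x [y [z [rx [axy xy dy yz dz]]]].
have [i [v [s0 h1 h2 vx]]] := alt_reach_walk rx.
have E1 : (2*i).+1 = 2*i+1 by lia.
have E2 : (2*i).+2 = 2*i+2 by lia.
exists i, (extend_seq v (2*i) y z); split.
- by rewrite extend_seq_le.
- move=> j ji; case: (ltnP j i) => [lji|lij]; first by rewrite !extend_seq_le; [exact: h1|lia|lia].
  have -> : j = i by lia.
  by rewrite -E1 extend_seq1 extend_seq_le // vx.
- by move=> j ji; rewrite !extend_seq_le; [exact: h2|lia|lia].
- by rewrite -E1 -E2 extend_seq1 extend_seq2.
- by rewrite -E2 extend_seq2.
Qed.

Lemma alt_walk_splice i v a t :
  alt_walk adj M i v -> 0 < t -> a + 2*t <= 2*i+1 -> v a = v (a + 2*t) ->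
  alt_walk adj M (i - t) (fun n => v (if n <= a then n else n + 2*t)).
Proof.
move=> [s0 h1 h2 [h3 h4] h5] t0 at1 vaa.
set w := fun n => _.
have wl n : n <= a -> w n = v n by rewrite /w => ->.
have wr n : a <= n -> w n = v (n + 2*t).
  rewrite /w leq_eqVlt => /orP [/eqP <-|an]; first by rewrite leqnn.
  by rewrite leqNgt an.
split.
- by rewrite wl.
- move=> j ji; case: (leqP (2*j+1) a) => ja.
    by rewrite !wl; [apply: h1|lia|lia]; lia.
  rewrite !wr; [|lia|lia].
  have -> : 2*j + 2*t = 2*(j+t) by lia.
  have -> : 2*j + 1 + 2*t = 2*(j+t)+1 by lia.
  by apply: h1; lia.
- move=> j ji; case: (leqP (2*j+2) a) => ja.
    by rewrite !wl; [apply: h2|lia|lia]; lia.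
  rewrite !wr; [|lia|lia].
  have -> : 2*j + 1 + 2*t = 2*(j+t)+1 by lia.
  have -> : 2*j + 2 + 2*t = 2*(j+t)+2 by lia.
  by apply: h2; lia.
- rewrite !wr; [|lia|lia].
  have -> : 2*(i-t) + 1 + 2*t = 2*i+1 by lia.
  by have -> : 2*(i-t) + 2 + 2*t = 2*i+2 by lia.
- rewrite wr; last by lia.
  by have -> : 2*(i-t) + 2 + 2*t = 2*i+2 by lia.
Qed.

Lemma alt_walk_mdeg_even i v p : alt_walk adj M i v -> p <= i -> mdeg M (v (2*p)) <= 1.
Proof.
case=> s0 _ h2 _ _; case: p => [|q] qi; first by rewrite (eqP s0).
have [/andP [_ /forallP hm] hM] := h2 q qi.
by rewrite (_ : 2 * q.+1 = 2*q+2); [move: (hm (v (2*q+2))); rewrite hM => /eqP -> | lia].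
Qed.

Lemma alt_walk_mdeg_odd i v p : alt_walk adj M i v -> p <= i -> mdeg M (v (2*p+1)) = 2.
Proof.
case=> _ _ h2 [h3 _] _; rewrite leq_eqVlt => /orP [/eqP -> //|pi].
by have [/andP [/eqP -> _] _] := h2 p pi.
Qed.

End Walks.

Section SavingPaths.
Variables (T : finType) (adj : rel T).
Hypotheses (adj_sym : symmetric adj) (adj_irr : irreflexive adj).
Variables (M : {set {set T}}).
Hypothesis HM : two_matching adj M.

(* A repeated vertex can only occur at two positions of the same parity, and the
   closed sub-walk between them can be cut out. *)
Lemma alt_walk_shorten i v a b :
  alt_walk adj M i v -> a < b -> b <= 2*i+2 -> v a = v b ->
  exists t v', [/\ 0 < t, t <= i & alt_walk adj M (i - t) v'].
Proof.
move=> W ab bN vab.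
have [p [ea|ea]] := nat_even_odd a; have [q [eb|eb]] := nat_even_odd b.
- case: (leqP q i) => qi.
    exists (q - p), (fun n => v (if n <= a then n else n + 2*(q-p))); split; try lia.
    by apply: alt_walk_splice => //; [lia|lia|rewrite vab eb ea; congr v; lia].
  have pi : p <= i by lia.
  have := alt_walk_mdeg_even W pi; rewrite -ea vab eb (_ : 2 * q = 2*i+2); last lia.
  by case: W => _ _ _ _ ->.
- have pi : p <= i by lia.
  have qi : q <= i by lia.
  by have := alt_walk_mdeg_even W pi; rewrite -ea vab eb (alt_walk_mdeg_odd W qi).
- case: (leqP q i) => qi.
    have := alt_walk_mdeg_even W qi; rewrite -eb -vab ea (alt_walk_mdeg_odd W) //; lia.
  have eb' : b = 2*i+2 by lia.
  case: (ltnP p i) => pi.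
    case: W => _ _ h2 [h3 h4] _.
    have [/andP [_ /forallP hm] _] := h2 p pi.
    by move: (hm (v (2*i+1))); rewrite -ea vab eb' setUC h4 /= h3.
  case: W => _ _ _ [_ h4] _.
  by move: h4; rewrite -eb' -vab ea (_ : p = i) ?(negbTE (edge_notin_loop adj_irr HM _)) //; lia.
- exists (q - p), (fun n => v (if n <= a then n else n + 2*(q-p))); split; try lia.
  by apply: alt_walk_splice => //; [lia|lia|rewrite vab eb ea; congr v; lia].
Qed.

Lemma alt_walk_uniq i v : alt_walk adj M i v -> exists i' v', alt_walk adj M i' v' /\
  (forall a b, a <= 2*i'+2 -> b <= 2*i'+2 -> v' a = v' b -> a = b).
Proof.
have [n] := ubnP i; elim: n i v => // n IH i v lt_in W.
have [vinj|[a [b [ab bN vab]]]] := injective_upto_or_dup v (2*i+2); first by exists i, v.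
have [t [v' [t0 ti W']]] := alt_walk_shorten W ab bN vab.
by apply: IH W'; lia.
Qed.

Lemma alt_saveable_saving_path :
  alt_saveable adj M -> exists v0, singleton M v0 /\ A_alt_path_saving adj M v0.
Proof.
move/alt_saveable_walk => [i0 [v0 W0]].
have [i [v [W vinj]]] := alt_walk_uniq W0.
case: (W) => s0 h1 h2 [h3 h4] h5.
have odd_idx j : 1 <= j -> 2*j - 1 = 2*j.-1 + 1 by lia.
exists (v 0); split => //; exists i, v; split => //; split => //; split.
- move=> j ji; have [ajj njj] := h1 j ji.
  by rewrite in_setD njj; apply/mem_edgesP; exists (v (2*j)), (v (2*j+1)).
- move=> j /andP [j1 ji]; have [mj mjM] := h2 j.-1 ltac:(lia).
  rewrite odd_idx // (_ : 2*j = 2*j.-1+2); last by lia.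
  exact: middle_two_path.
- move=> j k /andP [j1 ji] /andP [k1 ki]; rewrite !odd_idx // => ejk.
  have [mj _] := h2 j.-1 ltac:(lia); have [mk _] := h2 k.-1 ltac:(lia).
  have := subsetP (middle_mcomp adj_irr HM mk) (v (2*j.-1+1)).
  rewrite -ejk mem_mcomp inE => /(_ isT) /orP [/eqP e|nb].
    by have := vinj (2*j.-1+1) (2*k.-1+1) ltac:(lia) ltac:(lia) e; lia.
  case/andP: mk => _ /forallP /(_ (v (2*j.-1+1))); rewrite nb /=.
  by case/andP: mj => /eqP ->.
- rewrite h4 /is_endpoint h5 (comp_nedges_ge3 adj_sym adj_irr HM h3 h4 h5) orbT.
  by split.
Qed.

End SavingPaths.

Section Exchange.
Variables (T : finType) (adj : rel T).
Hypothesis adj_irr : irreflexive adj.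
Variables (M : {set {set T}}) (v0 v1 c : T).
Hypotheses (HM : two_matching adj M) (s0 : singleton M v0) (a01 : adj v0 v1)
  (mid1 : middle M v1) (v1cM : [set v1; c] \in M).

Let M' := [set v0; v1] |: (M :\ [set v1; c]).

Let v01M : [set v0; v1] \notin M.
Proof. by apply/negP => /(singleton_notin s0); rewrite set21. Qed.

Let n01 : v0 != v1. Proof. exact: adj_neq a01. Qed.

Let n1c : v1 != c.
Proof. by apply: contraTneq v1cM => ->; rewrite (negbTE (edge_notin_loop adj_irr HM c)). Qed.

Let n0c : v0 != c.
Proof. by apply: contraTneq (singleton_notin s0 v1cM) => ->; rewrite set22. Qed.

Let d1 : mdeg M v1 = 2. Proof. by case/andP: mid1 => /eqP. Qed.

Let dc : mdeg M c = 1.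
Proof. by case/andP: mid1 => _ /forallP /(_ c); rewrite v1cM => /eqP. Qed.

Let mem_exchange e : (e \in M') = (e == [set v0; v1]) || (e != [set v1; c]) && (e \in M).
Proof. by rewrite !inE. Qed.

Lemma exchange_mdeg x :
  mdeg M' x = mdeg M x - (x \in [set v1; c]) + (x \in [set v0; v1]).
Proof. by rewrite mdegU1 mdegD1 v1cM andbT !inE (negbTE v01M) andbF andbT. Qed.

Lemma exchange_mdeg_v0 : mdeg M' v0 = 1.
Proof. by rewrite exchange_mdeg (eqP s0) !inE eqxx (negbTE n01) (negbTE n0c). Qed.

Lemma exchange_mdeg_c : mdeg M' c = 0.
Proof.
by rewrite exchange_mdeg dc !inE eqxx orbT eq_sym (negbTE n0c) eq_sym (negbTE n1c).
Qed.

Lemma exchange_mdeg_other x : x != v0 -> x != c -> mdeg M' x = mdeg M x.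
Proof.
move=> nx0 nxc; rewrite exchange_mdeg !inE (negbTE nx0) (negbTE nxc) /= orbF.
by case: (x =P v1) => [->|_]; rewrite ?d1 ?subn0 ?addn0.
Qed.

Lemma exchange_two_matching : two_matching adj M'.
Proof.
case/andP: HM => ME /forallP Mdeg; apply/andP; split.
  apply/subsetP=> e; rewrite mem_exchange => /orP [/eqP ->|/andP [_ /(subsetP ME) //]].
  by apply/mem_edgesP; exists v0, v1.
apply/forallP=> x; rewrite exchange_mdeg !inE.
case: (x =P v0) => [->|/eqP nx0]; first by rewrite (eqP s0) (negbTE n01) (negbTE n0c).
case: (x =P v1) => [->|_]; first by rewrite d1.
by rewrite addn0; apply: leq_trans (leq_subr _ _) (Mdeg x).
Qed.

Lemma exchange_card : #|M'| = #|M|.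
Proof. by rewrite cardsU1 in_setD1 (negbTE v01M) andbF (cardsD1 [set v1; c] M) v1cM. Qed.

Lemma exchange_card_singletons :
  #|[set x | singleton M' x]| = #|[set x | singleton M x]|.
Proof.
have -> : [set x | singleton M' x] = c |: ([set x | singleton M x] :\ v0).
  apply/setP => x; rewrite !inE /singleton.
  case: (x =P c) => [->|/eqP nxc]; first by rewrite exchange_mdeg_c.
  case: (x =P v0) => [->|/eqP nx0]; first by rewrite exchange_mdeg_v0.
  by rewrite exchange_mdeg_other.
rewrite cardsU1 !inE /singleton dc eq_sym (negbTE n0c) /=.
by rewrite (cardsD1 v0 [set x | singleton M x]) inE s0.
Qed.

Lemma exchange_middle m : middle M' m -> m != v1 -> middle M m.
Proof.
case/andP=> /eqP dm /forallP hm nm1.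
have nm0 : m != v0 by apply: contra_eqN dm => /eqP ->; rewrite exchange_mdeg_v0.
have nmc : m != c by apply: contra_eqN dm => /eqP ->; rewrite exchange_mdeg_c.
rewrite /middle -exchange_mdeg_other // dm eqxx; apply/forallP=> y; apply/implyP=> myM.
have myM' : [set m; y] \in M'.
  rewrite mem_exchange myM andbT; apply/orP; right.
  by apply: contraNneq nm1 => h; move: (set21 m y); rewrite h !inE (negbTE nmc) orbF.
move: (hm y); rewrite myM' /= => /eqP dy.
have ny0 : y != v0 by apply: contraTneq (singleton_notin s0 myM) => ->; rewrite set22.
have nyc : y != c by apply: contra_eqN dy => /eqP ->; rewrite exchange_mdeg_c.
by rewrite -exchange_mdeg_other // dy.
Qed.

Let reach_v1 z : [set v1; z] \in M -> alt_reach adj M z.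
Proof. by move=> v1zM; apply: (alt_reachS (alt_reach0 adj s0) a01 v01M mid1 v1zM). Qed.

Lemma exchange_alt_reach x : alt_reach adj M' x -> alt_reach adj M x.
Proof.
elim=> {x} [x sx | x m z _ IH axm xm midm mz].
  case: (x =P c) => [->|/eqP nxc]; first exact: reach_v1.
  have nx0 : x != v0 by apply: contraTneq sx => ->; rewrite /singleton exchange_mdeg_v0.
  by apply: alt_reach0; rewrite /singleton -exchange_mdeg_other.
case: (m =P v1) => [em|/eqP nm1].
  move: mz; rewrite em mem_exchange => /orP [/eqP h|/andP [_]]; last exact: reach_v1.
  have : z \in [set v0; v1] by rewrite -h set22.
  rewrite !inE => /orP [/eqP ->|/eqP zv1]; first exact: alt_reach0.
  by move: (set21 v0 v1); rewrite -h zv1 !inE orbb (negbTE n01).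
have nm0 : m != v0 by apply: contraTneq midm => ->; rewrite /middle exchange_mdeg_v0.
have nmc : m != c by apply: contraTneq midm => ->; rewrite /middle exchange_mdeg_c.
have mzM : [set m; z] \in M.
  move: mz; rewrite mem_exchange => /orP [/eqP h|/andP [_ //]].
  by move: (set21 m z); rewrite h !inE (negbTE nm0) (negbTE nm1).
have xmM : [set x; m] \notin M.
  apply: contra xm => h; rewrite mem_exchange h andbT; apply/orP; right.
  by apply: contraNneq nm1 => h'; move: (set22 x m); rewrite h' !inE (negbTE nmc) orbF.
exact: alt_reachS IH axm xmM (exchange_middle midm nm1) mzM.
Qed.

Lemma exchange_saveable : alt_saveable adj M' -> alt_saveable adj M.
Proof.
case=> x [y [z [rx [axy xyM' dy yzM' dz]]]].
have ny0 : y != v0 by apply: contra_eqN dy => /eqP ->; rewrite exchange_mdeg_v0.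
have nyc : y != c by apply: contra_eqN dy => /eqP ->; rewrite exchange_mdeg_c.
have nz0 : z != v0 by apply: contra_eqN dz => /eqP ->; rewrite exchange_mdeg_v0.
have nzc : z != c by apply: contra_eqN dz => /eqP ->; rewrite exchange_mdeg_c.
have yzM : [set y; z] \in M.
  move: yzM'; rewrite mem_exchange => /orP [/eqP h|/andP [_ //]].
  by move: (set21 v0 v1); rewrite -h !inE eq_sym (negbTE ny0) eq_sym (negbTE nz0).
exists x, y, z; split; first exact: exchange_alt_reach.
rewrite -!exchange_mdeg_other //; split=> //.
apply/negP=> xyM; move: xyM'; rewrite mem_exchange xyM andbT => /norP [_ /negPn /eqP h].
have yv1 : y = v1 by move: (set22 x y); rewrite h !inE (negbTE nyc) orbF => /eqP.
move: yzM'; rewrite yv1 mem_exchange => /orP [/eqP h'|/andP [_ v1zM]].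
  have : z \in [set v0; v1] by rewrite -h' set22.
  rewrite !inE (negbTE nz0) /= => /eqP zv1.
  by move: (set21 v0 v1); rewrite -h' zv1 !inE orbb (negbTE n01).
by case/andP: mid1 => _ /forallP /(_ z); rewrite v1zM /= -exchange_mdeg_other // dz.
Qed.

End Exchange.

Section Unsaveable.
Variables (T : finType) (adj : rel T).
Hypotheses (adj_sym : symmetric adj) (adj_irr : irreflexive adj).
Variables (M : {set {set T}}).
Hypotheses (HM : max_two_matching adj M) (Munsave : ~ alt_saveable adj M).

Lemma max_two_matching_mdeg2 v0 v1 : singleton M v0 -> adj v0 v1 -> mdeg M v1 = 2.
Proof.
case: HM => /andP [ME /forallP Mdeg] Mmax s0 a01.
have v01M : [set v0; v1] \notin M by apply/negP => /(singleton_notin s0); rewrite set21.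
apply/eqP; rewrite eqn_leq Mdeg leqNgt; apply/negP => d1.
have : two_matching adj ([set v0; v1] |: M).
  apply/andP; split.
    by rewrite subUset sub1set ME andbT; apply/mem_edgesP; exists v0, v1.
  apply/forallP=> x; rewrite mdegU1 v01M andbT !inE.
  case: (x =P v0) => [->|_]; first by rewrite (eqP s0).
  by case: (x =P v1) => [->|_]; rewrite ?addn1 ?addn0.
by move/Mmax; rewrite cardsU1 v01M ltnn.
Qed.

Lemma unsaveable_middle v0 v1 : singleton M v0 -> adj v0 v1 -> middle M v1.
Proof.
case: HM => /andP [_ /forallP Mdeg] _ s0 a01.
have d1 := max_two_matching_mdeg2 s0 a01.
have v01M : [set v0; v1] \notin M by apply/negP => /(singleton_notin s0); rewrite set21.
rewrite /middle d1 eqxx; apply/forallP => x; apply/implyP => v1xM.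
have : mdeg M x != 2.
  apply/eqP => dx; apply: Munsave; exists v0, v1, x.
  by split; [exact: alt_reach0|split].
have : 0 < mdeg M x by apply/mdeg_gt0P; exists [set v1; x]; rewrite ?set22.
by have := Mdeg x; lia.
Qed.

(* Swapping an M-edge at the middle vertex v1 for the F-edge v0 v1 moves the
   singleton from v0 to the other end of the swapped edge. *)
Lemma exchange_step F v0 : two_matching adj F -> singleton M v0 -> ~~ singleton F v0 ->
  exists M', [/\ max_two_matching adj M', ~ alt_saveable adj M',
    #|[set x | singleton M' x]| = #|[set x | singleton M x]| &
    #|F :\: M'| < #|F :\: M|].
Proof.
move=> /andP [FE /forallP Fdeg] s0; rewrite /singleton -lt0n => /mdeg_gt0P [e eF v0e].
have [v1 [a01 ee]] := edges_at adj_sym (subsetP FE _ eF) v0e.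
have eM : e \notin M by apply/negP => /(singleton_notin s0); rewrite v0e.
have mid1 := unsaveable_middle s0 a01.
have [f fMF v1f] : exists2 f, f \in M :\: F & v1 \in f.
  by apply: (mdeg2_exchangeable (max_two_matching_mdeg2 s0 a01) (Fdeg v1) eF eM); rewrite ee set22.
case: HM => HM2 Mmax; case/andP: (HM2) => ME _.
move: fMF; rewrite inE => /andP [fF fM].
have [c [_ fe]] := edges_at adj_sym (subsetP ME _ fM) v1f; rewrite {}fe in fF fM.
exists ([set v0; v1] |: (M :\ [set v1; c])); split.
- split; first exact: exchange_two_matching.
  by move=> M' /Mmax; rewrite exchange_card.
- by move/(exchange_saveable adj_irr HM2 s0 a01 mid1 fM).
- exact: exchange_card_singletons.
- rewrite (cardsD1 e (F :\: M)) inE eM eF add1n ltnS -ee.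
  apply: subset_leq_card; apply/subsetP => g; rewrite !inE negb_or negb_and negbK.
  case/andP=> /andP [-> /orP [/eqP gc|->]] gF //.
  by move: fF; rewrite -gc gF.
Qed.

End Unsaveable.

Lemma unsaveable_card_singletons_le (T : finType) (adj : rel T)
    (adj_sym : symmetric adj) (adj_irr : irreflexive adj) (M F : {set {set T}}) :
  two_matching adj F -> max_two_matching adj M -> ~ alt_saveable adj M ->
  #|[set x | singleton M x]| <= #|[set x | singleton F x]|.
Proof.
move=> HF; have [n] := ubnP #|F :\: M|; elim: n M => // n IH M ltMn HM Munsave.
have [/subset_leq_card //|/subsetPn [v0]] :=
  boolP ([set x | singleton M x] \subset [set x | singleton F x]).
rewrite !inE => s0 nsF.
have [M' [HM' M'unsave <- ltM']] := exchange_step adj_sym adj_irr HM Munsave HF s0 nsF.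
by apply: IH => //; apply: leq_trans ltM' _.
Qed.

Definition seq_edges (T : finType) (p : seq T) : seq {set T} :=
  [seq [set ab.1; ab.2] | ab <- zip p (behead p)].

Definition seq_deg (T : finType) (p : seq T) (x : T) : nat :=
  #|[set e | (e \in seq_edges p) && (x \in e)]|.

Section SeqEdges.
Variable T : finType.
Implicit Types (p q : seq T) (ps : seq (seq T)) (x y z : T).

Lemma seq_edges_cons2 x y p : seq_edges [:: x, y & p] = [set x; y] :: seq_edges (y :: p).
Proof. by []. Qed.

Lemma seq_edges1 x : seq_edges [:: x] = [::].
Proof. by []. Qed.

Lemma seq_edges_cat x y p q :
  seq_edges (x :: p ++ y :: q) = seq_edges (x :: p) ++ [set last x p; y] :: seq_edges (y :: q).
Proof. by elim: p x => [|z p IHp] x //=; rewrite !seq_edges_cons2 /= -IHp. Qed.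

Lemma mem_seq_edges_rev p e : (e \in seq_edges (rev p)) = (e \in seq_edges p).
Proof.
elim: p => [|x [|y p] IHp] //; rewrite rev_cons -cats1 seq_edges_cons2 inE -IHp.
case E: (rev (y :: p)) => [|z q]; first by move: (congr1 size E); rewrite size_rev.
rewrite seq_edges_cat seq_edges1 mem_cat inE.
have -> : last z q = y by have := congr1 (last z) E; rewrite rev_cons last_rcons /= => <-.
by rewrite setUC orbC.
Qed.

Lemma mem_pc_edges ps e : (e \in pc_edges ps) = has (fun p => e \in seq_edges p) ps.
Proof.
rewrite inE; apply/flattenP/hasP; first by case=> s /mapP [p pps ->] es; exists p.
by case=> p pps ep; exists (seq_edges p) => //; apply: map_f.
Qed.

Lemma seq_edges_vertex p e x : e \in seq_edges p -> x \in e -> x \in p.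
Proof.
elim: p => [|a [|b p] IHp] //; rewrite seq_edges_cons2 inE => /orP [/eqP ->|ep] xe.
  by move: xe; rewrite !inE => /orP [] ->; rewrite ?orbT.
by rewrite inE (IHp ep xe) orbT.
Qed.

Lemma seq_edges_cover p x : 1 < size p -> x \in p -> exists2 e, e \in seq_edges p & x \in e.
Proof.
elim: p => [|a [|b p] IHp] //= _; rewrite seq_edges_cons2 inE => /orP [/eqP ->|].
  by exists [set a; b]; rewrite ?inE ?eqxx.
rewrite inE => /orP [/eqP ->|xp]; first by exists [set a; b]; rewrite ?inE ?eqxx ?orbT.
have sz : 1 < size (b :: p) by case: (p) xp.
have xbp : x \in b :: p by rewrite inE xp orbT.
have [e ep xe] := IHp sz xbp.
by exists e => //; rewrite inE ep orbT.
Qed.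

Lemma seq_degS p q z : {subset seq_edges p <= seq_edges q} -> seq_deg p z <= seq_deg q z.
Proof.
move=> s; apply: subset_leq_card; apply/subsetP => e; rewrite !inE => /andP [ep ->].
by rewrite s.
Qed.

Lemma seq_deg_le p x : uniq p ->
  seq_deg p x <= (if p is y :: _ then (if x == y then 1 else 2) else 0).
Proof.
rewrite /seq_deg; elim: p => [|a [|b r] IH] /=.
- by move=> _; rewrite (_ : [set e | _] = set0) ?cards0 //; apply/setP => e; rewrite !inE.
- move=> _; rewrite (_ : [set e | _] = set0) ?cards0; first by case: (x == a).
  by apply/setP => e; rewrite !inE.
move=> /andP [nar ubr]; have /= := IH ubr.
set S := [set e | (e \in seq_edges (b :: r)) && (x \in e)] => leS.
have sub : [set e | (e \in seq_edges [:: a, b & r]) && (x \in e)] \subset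
    (if x \in [set a; b] then [set a; b] |: S else S).
  apply/subsetP => e; rewrite inE seq_edges_cons2 inE => /andP [/orP [/eqP ->|er] xe].
    by rewrite xe !inE eqxx.
  by case: (x \in [set a; b]); rewrite !inE er xe ?orbT.
apply: leq_trans (subset_leq_card sub) _.
case: (x =P a) => [xa|/eqP nxa].
  suff -> : S = set0 by rewrite xa set21 setU0 cards1.
  apply/setP => e; rewrite !inE; apply/negP => /andP [er xe].
  by move: (seq_edges_vertex er xe); rewrite -xa in nar; rewrite (negbTE nar).
rewrite !inE (negbTE nxa); case: (x =P b) leS => [_|_] /= leS //.
by rewrite cardsU1; case: (_ \notin _) leS => /=; lia.
Qed.

Lemma seq_deg_le2 p x : uniq p -> seq_deg p x <= 2.
Proof. by move/(seq_deg_le x)/leq_trans; apply; case: p => [|z p] //; case: (x == z). Qed.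

Lemma seq_deg_interior p z : uniq p -> z \in p -> z != head z p -> z != last z p ->
  1 < seq_deg p z.
Proof.
elim: p => [|a [|b r] IH] //=; first by rewrite inE => _ /eqP ->; rewrite eqxx.
move=> /andP [nar ubr]; rewrite inE => /orP [/eqP ->|zbr]; first by rewrite eqxx.
move=> _ zl; case: (z =P b) => [zb|/eqP nzb].
  case: r zl ubr nar {IH zbr} => [|c r1]; first by rewrite /= zb eqxx.
  move=> _ _; rewrite !inE negb_or => /andP [nab /norP [nac _]].
  have n12 : [set a; b] != [set b; c].
    by apply/eqP => h; move: (set21 a b); rewrite h !inE (negbTE nab) (negbTE nac).
  apply: leq_trans (_ : #|[set [set a; b]; [set b; c]]| <= _); first by rewrite cards2 n12.
  apply: subset_leq_card.
  apply/subsetP => e; rewrite in_set2 => /orP [] /eqP ->;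
    by rewrite inE !seq_edges_cons2 !in_cons eqxx ?orbT /= !inE zb eqxx ?orbT.
apply: leq_trans (IH ubr zbr nzb zl) _.
by apply: seq_degS => e er; rewrite seq_edges_cons2 inE er orbT.
Qed.

Lemma seq_edges_sub_edges (adj : rel T) x p e :
  path adj x p -> e \in seq_edges (x :: p) -> e \in edges adj.
Proof.
elim: p x => [|y p IHp] x //= /andP [axy pp]; rewrite seq_edges_cons2 inE => /orP [/eqP ->|].
  by apply/mem_edgesP; exists x, y.
exact: IHp.
Qed.

Lemma gpath_rev (adj : rel T) p : symmetric adj -> gpath adj p -> gpath adj (rev p).
Proof.
case: p => [|a r] //= adj_sym /andP [pr ur].
have : uniq (rev (a :: r)) by rewrite rev_uniq.
rewrite lastI rev_rcons /= => /andP [-> ->]; rewrite rev_path.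
by rewrite !andbT (@eq_path _ _ adj) // => u w; rewrite adj_sym.
Qed.

End SeqEdges.

Section PathCovers.
Variables (T : finType) (adj : rel T).
Implicit Types (p : seq T) (ps : seq (seq T)) (x z : T).

Lemma mdeg_pc_edges ps p x : uniq (flatten ps) -> p \in ps -> x \in p ->
  mdeg (pc_edges ps) x = seq_deg p x.
Proof.
move=> up pps xp; apply: eq_card => e; rewrite inE [RHS]inE mem_pc_edges.
apply/andP/andP => [[/hasP [r rps er] xe]|[ep xe]]; last by split=> //; apply/hasP; exists p.
by rewrite (uniq_flatten_eq up pps rps xp (seq_edges_vertex er xe)).
Qed.

Lemma path_cover_singleton ps p x : path_cover adj ps -> p \in ps -> x \in p ->
  singleton (pc_edges ps) x = (size p == 1).
Proof.
case/and3P => _ up _ pps xp; rewrite /singleton (mdeg_pc_edges up pps xp).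
case: p pps xp => [|y [|w q]] // pps xp.
  by rewrite /seq_deg (_ : [set e | _] = set0) ?cards0 //; apply/setP => e; rewrite !inE.
have [e ep xe] := seq_edges_cover (isT : 1 < size [:: y, w & q]) xp.
by apply/negbTE; rewrite -lt0n card_gt0; apply/set0Pn; exists e; rewrite inE ep xe.
Qed.

Lemma path_cover_two_matching ps : path_cover adj ps -> two_matching adj (pc_edges ps).
Proof.
case/and3P => /allP gp up /forallP cover; apply/andP; split.
  apply/subsetP => e; rewrite mem_pc_edges => /hasP [p pps ep].
  by move: (gp p pps) ep; case: (p) => [|y q] // /andP [yq _]; apply: seq_edges_sub_edges.
apply/forallP => x; have /flattenP [p pps xp] := cover x.
by rewrite (mdeg_pc_edges up pps xp) seq_deg_le2 // (uniq_flatten_mem up pps).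
Qed.

Lemma n_zero_paths_card_singletons ps : path_cover adj ps ->
  n_zero_paths ps = #|[set x | singleton (pc_edges ps) x]|.
Proof.
move=> cov; have /and3P [/allP gp up /forallP cover] := cov.
have ups : uniq ps by apply: uniq_flatten_uniq up => p /gp; case: p.
rewrite /n_zero_paths -size_filter cardE -(size_map (fun x => [:: x])).
apply/perm_size/uniq_perm; first exact: filter_uniq.
  by rewrite map_inj_uniq ?enum_uniq // => a b [].
move=> s; rewrite mem_filter; apply/andP/mapP => [[s1 sps]|[x]].
  case: s s1 sps => [|x [|]] // _ sps; exists x => //.
  by rewrite mem_enum inE (path_cover_singleton cov sps) ?inE.
rewrite mem_enum inE => sx ->; have /flattenP [p pps xp] := cover x.
rewrite (path_cover_singleton cov pps xp) in sx.
by case: p pps xp sx => [|y [|]] //; rewrite inE => pps /eqP ->.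
Qed.

End PathCovers.

(* A cycle of L is represented by its vertex set, which is 2-regular in L and
   closed under incident L-edges. *)
Definition cycle_free (T : finType) (L : {set {set T}}) : Prop :=
  forall U : {set T}, U != set0 -> {in U, forall v, mdeg L v = 2} ->
  (forall v e, v \in U -> e \in L -> v \in e -> e \subset U) -> False.

Section PathCoverConstruction.
Variables (T : finType) (adj : rel T).
Hypotheses (adj_sym : symmetric adj) (adj_irr : irreflexive adj).
Implicit Types (p q : seq T) (ps : seq (seq T)) (L : {set {set T}}) (x y z : T).

Lemma gpath_orient_last p x : gpath adj p -> x = head x p \/ x = last x p ->
  exists a s, [/\ gpath adj (a :: s), perm_eq (a :: s) p,
                  seq_edges (a :: s) =i seq_edges p & last a s = x].
Proof.
case: p => [|a s] // gp [/= ->|->]; last by exists a, s.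
have E : rev (a :: s) = last a s :: rev (belast a s) by rewrite lastI rev_rcons.
have gr := gpath_rev adj_sym gp; rewrite E in gr.
exists (last a s), (rev (belast a s)); split => //.
- by rewrite -E perm_rev.
- by move=> e; rewrite -E mem_seq_edges_rev.
- by rewrite last_rev; case: s {gp gr E}.
Qed.

Lemma gpath_orient_head p x : gpath adj p -> x = head x p \/ x = last x p ->
  exists s, [/\ gpath adj (x :: s), perm_eq (x :: s) p & seq_edges (x :: s) =i seq_edges p].
Proof.
move=> gp /(gpath_orient_last gp) [a [s [gs ps es <-]]].
have gr := gpath_rev adj_sym gs; rewrite lastI rev_rcons in gr.
exists (rev (belast a s)); split => //.
- by rewrite -rev_rcons -lastI perm_rev.
- by move=> e; rewrite -rev_rcons -lastI mem_seq_edges_rev.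
Qed.

Lemma path_cover_endpoint ps p z : path_cover adj ps -> p \in ps -> z \in p ->
  mdeg (pc_edges ps) z <= 1 -> z = head z p \/ z = last z p.
Proof.
case/and3P => _ up _ pps zp; rewrite (mdeg_pc_edges up pps zp) => dz.
case: (eqVneq z (head z p)) => [|nh]; first by left.
case: (eqVneq z (last z p)) => [|nl]; first by right.
by have := seq_deg_interior (uniq_flatten_mem up pps) zp nh nl; lia.
Qed.

Lemma path_cover_close_cycle ps p x y :
  path_cover adj ps -> p \in ps -> x \in p -> y \in p -> x != y ->
  [set x; y] \notin pc_edges ps -> mdeg (pc_edges ps) x <= 1 -> mdeg (pc_edges ps) y <= 1 ->
  ~ cycle_free ([set x; y] |: pc_edges ps).
Proof.
move=> cov pps xp yp nxy xyF dx dy nc; have /and3P [_ up _] := cov.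
have up1 := uniq_flatten_mem up pps.
have degE z : z \in p -> mdeg ([set x; y] |: pc_edges ps) z = seq_deg p z + (z \in [set x; y]).
  by move=> zp; rewrite mdegU1 xyF andbT (mdeg_pc_edges up pps zp).
have xe := path_cover_endpoint cov pps xp dx; have ye := path_cover_endpoint cov pps yp dy.
have hp w : head w p = head x p by case: (p) xp.
have lp w : last w p = last x p by case: (p) xp.
have ye' : y = head x p \/ y = last x p by rewrite -(hp y) -(lp y).
have hxy : head x p \in [set x; y].
  case: xe ye' => ex [] ey; rewrite -?ex -?ey ?set21 ?set22 //.
  by move: nxy; rewrite {1}ex ey eqxx.
have lxy : last x p \in [set x; y].
  case: xe ye' => ex [] ey; rewrite -?ex -?ey ?set21 ?set22 //.
  by move: nxy; rewrite {1}ex ey eqxx.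
have ends z : z \notin [set x; y] -> z != head z p /\ z != last z p.
  by move=> zxy; rewrite hp lp; split; apply: contraNneq zxy => ->.
apply: (nc [set z | z \in p]) => [|z|v e].
- by apply/set0Pn; exists x; rewrite inE.
- rewrite inE => zp; rewrite degE //; have := seq_deg_le2 z up1.
  case: (boolP (z \in [set x; y])) => zxy.
    have [e ep ze] : exists2 e, e \in seq_edges p & z \in e.
      apply: seq_edges_cover zp; case: (p) xp yp => [|a [|b r]] //.
      by rewrite !inE => /eqP ex /eqP ey; rewrite ex ey eqxx in nxy.
    have : 0 < seq_deg p z by rewrite card_gt0; apply/set0Pn; exists e; rewrite inE ep ze.
    have : seq_deg p z <= 1.
      by rewrite -(mdeg_pc_edges up pps zp); move: zxy; rewrite !inE => /orP [] /eqP ->.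
    by rewrite addn1; case: (seq_deg p z) => [|[|]].
  have [nh nl] := ends z zxy; have := seq_deg_interior up1 zp nh nl.
  by rewrite addn0 => h1 h2; apply/eqP; rewrite eqn_leq h1 h2.
- rewrite inE => vp; rewrite in_setU1 => /orP [/eqP -> _|eF ve]; apply/subsetP => w.
    by rewrite !inE => /orP [] /eqP ->.
  move: eF; rewrite mem_pc_edges => /hasP [r rps er] we.
  by rewrite inE (uniq_flatten_eq up pps rps vp (seq_edges_vertex er ve)) (seq_edges_vertex er we).
Qed.

Lemma path_cover_join ps p q x y :
  path_cover adj ps -> p \in ps -> q \in ps -> p != q -> adj x y ->
  x = head x p \/ x = last x p -> y = head y q \/ y = last y q ->
  exists ps', path_cover adj ps' /\ pc_edges ps' = [set x; y] |: pc_edges ps.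
Proof.
case/and3P => /allP gps up /forallP cover pps qps npq axy xend yend.
have [a [s [gp pp ep lx]]] := gpath_orient_last (gps p pps) xend.
have [t [gq qq eq]] := gpath_orient_head (gps q qps) yend.
have ups : uniq ps by apply: uniq_flatten_uniq up => r /gps; case: r.
set rest := rem q (rem p ps).
have ps_perm : perm_eq ps [:: p, q & rest].
  apply: perm_trans (perm_to_rem pps) _; rewrite perm_cons perm_to_rem //.
  by rewrite (mem_rem_uniq _ ups) inE eq_sym npq qps.
have flat_perm : perm_eq (flatten ((a :: s ++ y :: t) :: rest)) (flatten ps).
  rewrite perm_sym; apply: perm_trans (perm_flatten ps_perm) _ => /=.
  by rewrite -cat_cons catA perm_cat2r perm_sym -cat_cons perm_cat.
have uflat : uniq (flatten ((a :: s ++ y :: t) :: rest)) by rewrite (perm_uniq flat_perm).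
exists ((a :: s ++ y :: t) :: rest); split.
  apply/and3P; split=> //; last by apply/forallP => z; rewrite (perm_mem flat_perm).
  apply/allP => r; rewrite inE => /orP [/eqP ->|/mem_rem /mem_rem]; last exact: gps.
  have uh : uniq (a :: s ++ y :: t).
    move: uflat; rewrite (_ : flatten _ = (a :: s ++ y :: t) ++ flatten rest) //.
    by rewrite cat_uniq => /andP [].
  move: gp gq => /andP [pas _] /andP [pyt _].
  by apply/andP; split=> //; rewrite cat_path /= lx axy pas pyt.
apply/setP => f; rewrite in_setU1 !mem_pc_edges (perm_has _ ps_perm) /=.
rewrite seq_edges_cat lx mem_cat inE ep -[_ :: t]/(y :: t) eq.
by case: (f \in seq_edges p); case: (f == _); case: (f \in seq_edges q).
Qed.

Lemma trivial_path_cover : exists ps, path_cover adj ps /\ pc_edges ps = set0.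
Proof.
have fl (s : seq T) : flatten [seq [:: x] | x <- s] = s by elim: s => //= x s ->.
exists [seq [:: x] | x <- enum T]; split.
  apply/and3P; split; first by apply/allP => p /mapP [x _ ->].
    by rewrite fl enum_uniq.
  by apply/forallP => x; rewrite fl mem_enum.
by apply/setP => e; rewrite mem_pc_edges inE; apply/hasP => [[p /mapP [x _ ->]]].
Qed.

Lemma cycle_free_D1 L e :
  e \in L -> (forall x, mdeg L x <= 2) -> cycle_free L -> cycle_free (L :\ e).
Proof.
move=> eL Ldeg nc U U0 dU eU.
have dL v : v \in U -> mdeg L v = 2 + (v \in e).
  by move=> vU; rewrite -{1}(setD1K eL) mdegU1 dU // !inE eqxx andbT.
apply: (nc U U0) => [v vU|v f vU fL vf]; first by have := Ldeg v; rewrite dL //; case: (v \in e).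
case: (f =P e) => [fe|/eqP nfe]; last by apply: (eU v f vU) => //; rewrite !inE nfe fL.
by have := Ldeg v; rewrite dL // -fe vf.
Qed.

Lemma path_cover_of_cycle_free L : L \subset edges adj -> (forall x, mdeg L x <= 2) ->
  cycle_free L -> exists ps, path_cover adj ps /\ pc_edges ps = L.
Proof.
have [n] := ubnP #|L|; elim: n L => // n IH L ltLn LE Ldeg nc.
have [->|[e eL]] := set_0Vmem L; first exact: trivial_path_cover.
have [ps [cov psL']] : exists ps, path_cover adj ps /\ pc_edges ps = L :\ e.
  apply: IH; last exact: cycle_free_D1 eL Ldeg nc.
  - by move: ltLn; rewrite (cardsD1 e L) eL.
  - by apply: subset_trans LE; apply: subsetDl.
  - by move=> x; apply: leq_trans (Ldeg x); apply/mdegS/subsetDl.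
have [x [y [axy exy]]] := mem_edgesP _ _ (subsetP LE e eL).
have LU : L = [set x; y] |: pc_edges ps by rewrite psL' -exy setD1K.
have xyF : [set x; y] \notin pc_edges ps by rewrite psL' -exy !inE eqxx.
have deg1 z : z \in [set x; y] -> mdeg (pc_edges ps) z <= 1.
  by move=> zxy; have := Ldeg z; rewrite LU mdegU1 zxy xyF addn1.
have dx := deg1 x (set21 x y); have dy := deg1 y (set22 x y).
have /and3P [_ _ /forallP cover] := cov.
have /flattenP [p pps xp] := cover x; have /flattenP [q qps yq] := cover y.
have npq : p != q.
  apply/eqP => epq; rewrite -epq in yq.
  by apply: (path_cover_close_cycle cov pps xp yq (adj_neq adj_irr axy) xyF dx dy); rewrite -LU.
have [ps' [cov' ps'L]] := path_cover_join cov pps qps npq axy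
  (path_cover_endpoint cov pps xp dx) (path_cover_endpoint cov qps yq dy).
by exists ps'; rewrite ps'L -LU.
Qed.

End PathCoverConstruction.

Definition cycle_breaker (T : finType) (M D : {set {set T}}) : Prop :=
  [/\ D \subset M,
      forall x, is_cycle_comp M (mcomp M x) -> #|[set e in D | e \subset mcomp M x]| = 1
    & forall e, e \in D -> exists x, is_cycle_comp M (mcomp M x) && (e \subset mcomp M x)].

Section CycleBreaking.
Variables (T : finType) (adj : rel T).
Hypotheses (adj_sym : symmetric adj) (adj_irr : irreflexive adj).
Variables (M : {set {set T}}).
Hypothesis HM : two_matching adj M.

Lemma mcomp_cycle_mdeg x : is_cycle_comp M (mcomp M x) -> mdeg M x = 2.
Proof. by move/forallP/(_ x); rewrite mem_mcomp => /eqP. Qed.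

Lemma edge_sub_mcomp_at e z : e \in M -> z \in e -> e \subset mcomp M z.
Proof.
case/andP: HM => ME _ eM ze; have [w [_ ee]] := edges_at adj_sym (subsetP ME _ eM) ze.
by rewrite ee edge_sub_mcomp // -ee.
Qed.

(* A vertex set closed under incident M-edges all of whose vertices have degree 2
   in M :\: D contains a whole cycle component, hence an edge of D. *)
Lemma cycle_breaker_cycle_free D : cycle_breaker M D -> cycle_free (M :\: D).
Proof.
case=> sDM D1 _ U U0 dU eU; case/andP: HM => ME /forallP Mdeg.
have allMD v e : v \in U -> e \in M -> v \in e -> e \in M :\: D.
  move=> vU eM ve; have sub : [set f in M :\: D | v \in f] \subset [set f in M | v \in f].
    by apply/subsetP => f; rewrite !inE => /andP [/andP [_ ->] ->].
  have : [set f in M :\: D | v \in f] = [set f in M | v \in f].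
    by apply/eqP; rewrite eqEcard sub /=; have := dU v vU; rewrite /mdeg => ->; exact: Mdeg.
  by move/setP/(_ e); rewrite !inE eM ve !andbT => ->.
have [v vU] := set0Pn _ U0.
have cU : mcomp M v \subset U.
  apply/subsetP => w; rewrite inE => cw; apply: (connect_stable _ vU cw) => u w' uU uw'.
  by apply: (subsetP (eU u _ uU (allMD u _ uU uw' (set21 u w')) (set21 u w'))); rewrite set22.
have cyc : is_cycle_comp M (mcomp M v).
  apply/forallP => y; apply/implyP => yc; have yU := subsetP cU y yc.
  by rewrite eqn_leq Mdeg -(dU y yU) mdegS // subsetDl.
have /eqP/cards1P [f Df] := D1 v cyc.
have : f \in [set e in D | e \subset mcomp M v] by rewrite Df set11.
rewrite inE => /andP [fD fc]; have fM := subsetP sDM f fD.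
have [a [b [_ ef]]] := mem_edgesP _ _ (subsetP ME f fM).
have aU : a \in U by apply: (subsetP cU); apply: (subsetP fc); rewrite ef set21.
by have := allMD a f aU fM; rewrite ef set21 -ef inE fD => /(_ isT).
Qed.

Lemma cycle_breaker_singletons D : cycle_breaker M D ->
  [set x | singleton (M :\: D) x] = [set x | singleton M x].
Proof.
case=> sDM D1 D2; apply/setP => z; rewrite !inE /singleton.
apply/idP/idP => [/eqP s0|/eqP s0]; last by rewrite -leqn0 -s0 mdegS // subsetDl.
have := mdegD M D z; rewrite s0 add0n.
have Dz : [set f in D | z \in f] \subset [set e in D | e \subset mcomp M z].
  apply/subsetP => f; rewrite !inE => /andP [fD zf].
  by rewrite fD edge_sub_mcomp_at // (subsetP sDM).
case: (boolP (is_cycle_comp M (mcomp M z))) => cyc.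
  by rewrite (mcomp_cycle_mdeg cyc) => /leq_trans/(_ (subset_leq_card Dz)); rewrite D1.
suff -> : [set f in D | z \in f] = set0 by rewrite cards0 leqn0.
apply/setP => f; rewrite !inE; apply/negP => /andP [fD zf].
have [x /andP [cx fx]] := D2 f fD; have zx : z \in mcomp M x by apply: (subsetP fx).
by move: cyc; rewrite (mcomp_eq zx) cx.
Qed.

Lemma cycle_breaker_exists : exists D, cycle_breaker M D.
Proof.
pose pk (C : {set T}) := [pick f | (f \in M) && (f \subset C)].
have pkP C f : pk C = Some f -> (f \in M) && (f \subset C).
  by rewrite /pk; case: pickP => // g ? [<-].
exists [set f in M | [exists x, is_cycle_comp M (mcomp M x) && (pk (mcomp M x) == Some f)]].
split.
- by apply/subsetP => f; rewrite inE => /andP [].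
- move=> x cx; case E : (pk (mcomp M x)) => [f|]; last first.
    move: E; rewrite /pk; case: pickP => // none _.
    have [e1 [_ [_ e1M xe1 _ _]]] := mdeg2P (mcomp_cycle_mdeg cx).
    by move: (none e1); rewrite e1M edge_sub_mcomp_at.
  apply/eqP/cards1P; exists f; apply/setP => g; rewrite !inE; apply/idP/idP.
    case/andP => /andP [gM /existsP [x' /andP [_ /eqP pg]]] gx.
    have /andP [_ gx'] := pkP _ _ pg; case/andP: HM => ME _.
    have [a [b [_ eg]]] := mem_edgesP _ _ (subsetP ME g gM).
    have ax : a \in mcomp M x by apply: (subsetP gx); rewrite eg set21.
    have ax' : a \in mcomp M x' by apply: (subsetP gx'); rewrite eg set21.
    by move: pg; rewrite -(mcomp_eq ax') (mcomp_eq ax) E => [[->]].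
  move/eqP ->; have /andP [-> ->] := pkP _ _ E; rewrite /= andbT.
  by apply/existsP; exists x; rewrite cx E eqxx.
- move=> f; rewrite inE => /andP [_ /existsP [x /andP [cx /eqP pf]]].
  by have /andP [_ fx] := pkP _ _ pf; exists x; rewrite cx fx.
Qed.

Lemma cycle_breaker_path_cover D : cycle_breaker M D ->
  exists ps, [/\ path_cover adj ps, pc_edges ps = M :\: D
               & n_zero_paths ps = #|[set x | singleton M x]|].
Proof.
move=> bD; case/andP: HM => ME /forallP Mdeg.
have [ps [cov psMD]] := path_cover_of_cycle_free adj_sym adj_irr
  (subset_trans (subsetDl M D) ME) (fun x => leq_trans (mdegS x (subsetDl M D)) (Mdeg x))
  (cycle_breaker_cycle_free bD).
exists ps; split => //.
by rewrite (n_zero_paths_card_singletons cov) psMD cycle_breaker_singletons.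
Qed.

End CycleBreaking.

Theorem mainTheorem4 (T : finType) (adj : rel T)
  (adj_sym : symmetric adj) (adj_irr : irreflexive adj)
  (M : {set {set T}}) (HM : max_two_matching adj M)
  (Hnosave : forall v0 : T, singleton M v0 -> ~ A_alt_path_saving adj M v0) :
  let s := #|[set x | singleton M x]| in
  [/\ (forall ps, path_cover adj ps -> s <= n_zero_paths ps),
      (exists ps, path_cover adj ps /\ n_zero_paths ps = s)
    & (forall D : {set {set T}}, D \subset M ->
        (forall x, is_cycle_comp M (mcomp M x) ->
           #|[set e in D | e \subset mcomp M x]| = 1) ->
        (forall e, e \in D ->
           exists x, is_cycle_comp M (mcomp M x) && (e \subset mcomp M x)) ->
        exists ps, [/\ path_cover adj ps, pc_edges ps = M :\: D
                     & n_zero_paths ps = s])].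
Proof.
have HM2 : two_matching adj M by case: HM.
have Munsave : ~ alt_saveable adj M.
  by case/(alt_saveable_saving_path adj_sym adj_irr HM2) => v0 [/Hnosave].
move=> s; rewrite {}/s; split.
- move=> ps cov; rewrite (n_zero_paths_card_singletons cov).
  apply: (unsaveable_card_singletons_le adj_sym adj_irr _ HM Munsave).
  exact: path_cover_two_matching cov.
- have [D bD] := cycle_breaker_exists adj_sym HM2.
  by have [ps [cov _ nz]] := cycle_breaker_path_cover adj_sym adj_irr HM2 bD; exists ps.
- by move=> D sDM D1 D2; apply: (cycle_breaker_path_cover adj_sym adj_irr HM2).
Qed.
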